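(* Let $(X,d)$ be a $\delta$-hyperbolic space and $\Gamma$ a group acting properly by isometries on $X$, with $\operatorname{diam}(\Gamma\backslash X)\le D$ and $\operatorname{Ent}(X,d)\le H$. Then for every $x\in X$ and every $R\ge 10(D+2\delta)$, $$\frac{\#\{\gamma\in\Gamma:d(x,\gamma x)<2R\}}{\#\{\gamma\in\Gamma:d(x,\gamma x)<R\}}\ \le\ 3^4e^{\frac{13}{2}HR}.$$
   Context: A $\delta$-hyperbolic space is a geodesic proper metric space all of whose geodesic triangles are $\delta$-thin (for a triangle $\Delta$ with vertices $x,y,z$, its tripod $T_\Delta$ has edges of lengths $(y|z)_x,(x|z)_y,(x|y)_z$ where $(y|z)_x=\frac12(d(x,y)+d(x,z)-d(y,z))$; the map $f_\Delta:\Delta\to T_\Delta$ is isometric on each side and sends vertices to ends; $\delta$-thin means $f_\Delta(u)=f_\Delta(v)\Rightarrow d(u,v)\le\delta$). A proper action: $\{\gamma: d(x,\gamma x)\le R\}$ finite for all $x,R$. $\Gamma\backslash X$ carries the quotient distance $\bar d(\Gamma x,\Gamma y)=\inf_\gamma d(x,\gamma y)$. $\operatorname{Ent}(X,d)=\liminf_{R\to\infty}\frac1R\ln\#\{\gamma\in\Gamma:d(x,\gamma x)<R\}$. *)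

From Stdlib Require Export Reals Lra List.
Open Scope R_scope.

Definition IsMetric {X : Type} (d : X -> X -> R) : Prop :=
  (forall x y, 0 <= d x y) /\
  (forall x y, d x y = 0 <-> x = y) /\
  (forall x y, d x y = d y x) /\
  (forall x y z, d x z <= d x y + d y z).

Definition IsGeodesic {X : Type} (d : X -> X -> R) (a b : X) (c : R -> X) : Prop :=
  c 0 = a /\ c (d a b) = b /\
  forall s t, 0 <= s <= d a b -> 0 <= t <= d a b -> d (c s) (c t) = Rabs (s - t).

Definition Geodesic {X : Type} (d : X -> X -> R) : Prop :=
  forall a b, exists c, IsGeodesic d a b c.

(* proper: closed balls are (sequentially) compact *)
Definition Proper {X : Type} (d : X -> X -> R) : Prop :=
  forall (x0 : X) (r : R) (u : nat -> X),
    (forall n, d x0 (u n) <= r) ->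
    exists (phi : nat -> nat) (l : X),
      (forall n, (phi n < phi (S n))%nat) /\
      forall eps, eps > 0 -> exists N, forall n, (n >= N)%nat -> d (u (phi n)) l < eps.

Definition gromov {X : Type} (d : X -> X -> R) (x y z : X) : R :=
  (d x y + d x z - d y z) / 2.

(* The geodesic triangle with vertices x y z and sides cxy : x -> y,
   cxz : x -> z, cyz : y -> z is delta-thin: two points with the same image
   under the tripod map f_Delta are at distance <= delta.  Points on the
   same side have the same image only if they coincide (f is isometric on
   each side); points on two different sides have the same image iff they
   lie at the same distance t <= (Gromov product) from the common vertex. *)
Definition ThinTriangle {X : Type} (d : X -> X -> R) (delta : R)
  (x y z : X) (cxy cxz cyz : R -> X) : Prop :=
  (forall t, 0 <= t <= gromov d x y z -> d (cxy t) (cxz t) <= delta) /\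
  (forall t, 0 <= t <= gromov d y x z ->
       d (cxy (d x y - t)) (cyz t) <= delta) /\
  (forall t, 0 <= t <= gromov d z x y ->
       d (cxz (d x z - t)) (cyz (d y z - t)) <= delta).

Definition Hyperbolic {X : Type} (d : X -> X -> R) (delta : R) : Prop :=
  IsMetric d /\ Geodesic d /\ Proper d /\
  forall x y z cxy cxz cyz,
    IsGeodesic d x y cxy -> IsGeodesic d x z cxz -> IsGeodesic d y z cyz ->
    ThinTriangle d delta x y z cxy cxz cyz.

Definition IsGroup {G : Type} (mul : G -> G -> G) (inv : G -> G) (e : G) : Prop :=
  (forall a b c, mul a (mul b c) = mul (mul a b) c) /\
  (forall a, mul e a = a /\ mul a e = a) /\
  (forall a, mul (inv a) a = e /\ mul a (inv a) = e).

Definition IsometricAction {G X : Type} (mul : G -> G -> G) (e : G)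
  (d : X -> X -> R) (act : G -> X -> X) : Prop :=
  (forall x, act e x = x) /\
  (forall g h x, act (mul g h) x = act g (act h x)) /\
  (forall g x y, d (act g x) (act g y) = d x y).

Definition HasCard {G : Type} (P : G -> Prop) (n : nat) : Prop :=
  exists l : list G, NoDup l /\ length l = n /\ forall g, In g l <-> P g.

Definition ProperAction {G X : Type} (d : X -> X -> R) (act : G -> X -> X) : Prop :=
  forall x r, exists n, HasCard (fun g => d x (act g x) <= r) n.

(* diam(Gamma \ X) <= D for the quotient distance
   dbar(Gx, Gy) = inf_g d(x, g y) *)
Definition QuotDiamLe {G X : Type} (d : X -> X -> R) (act : G -> X -> X) (D : R) : Prop :=
  forall x y eps, eps > 0 -> exists g, d x (act g y) < D + eps.

(* Ent(X,d) = liminf_{r -> oo} (1/r) ln #{g | d(x, g x) < r} <= H,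
   i.e. for every eps > 0 there are arbitrarily large r with
   (1/r) ln N(r) <= H + eps. *)
Definition EntLe {G X : Type} (d : X -> X -> R) (act : G -> X -> X) (x : X) (H : R) : Prop :=
  forall eps r0, eps > 0 -> exists r n, r >= r0 /\ r > 0 /\
    HasCard (fun g => d x (act g x) < r) n /\ ln (INR n) / r <= H + eps.

(* Write N(s) for the number of g with d(x, g x) < s.  For r <= t and t' = t + r/4,
   thin triangles and the bound on the diameter of the quotient give, for every s,
     N(s) (N(t') - 2 N(t)) <= N(s + t') N(t):
   for a in B(s), all b in B(t') except those in B(t) or in one translate g B(t) put
   a x close to a geodesic [x, a b x], and then (a, b) is recovered from a b together
   with an element of B(t) moving x near a x.  With beta = N(t')/N(t) - 2 this yields
   N((k+1) t') >= beta^k, so the entropy bound forces beta <= exp (H t'), i.e.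
   N(t') <= 3 exp (H t') N(t).  Four such steps lead from r to 2r, and
   5/4 + 3/2 + 7/4 + 2 = 13/2. *)

From Stdlib Require Import Reals List Lra Lia ZArith ClassicalEpsilon.
Open Scope R_scope.

Lemma HasCard_length {T : Type} (P : T -> Prop) (n : nat) (l : list T) :
  HasCard P n -> NoDup l -> (forall g, In g l <-> P g) -> n = length l.
Proof.
  intros [k [Hk [<- HkP]]] Hl HlP.
  apply Nat.le_antisymm; apply NoDup_incl_length; auto;
    intros g Hg; [apply HlP, HkP | apply HkP, HlP]; exact Hg.
Qed.

Lemma NoDup_list_prod {A B : Type} (la : list A) (lb : list B) :
  NoDup la -> NoDup lb -> NoDup (list_prod la lb).
Proof.
  intros Hla Hlb; induction Hla as [|a la Ha Hla IH]; simpl; [constructor|].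
  apply NoDup_app; auto.
  - apply NoDup_map_NoDup_ForallPairs; auto.
    intros y z _ _ E; inversion E; auto.
  - intros p Hp Hp'. apply in_map_iff in Hp as [y [<- _]].
    apply in_prod_iff in Hp' as [Hc _]. contradiction.
Qed.

Lemma length_filter_list_prod_ge {A B : Type} (f : A -> B -> bool)
  (la : list A) (lb : list B) (m : nat) :
  (forall a, In a la -> (m <= length (filter (f a) lb))%nat) ->
  (length la * m <= length (filter (fun p => f (fst p) (snd p)) (list_prod la lb)))%nat.
Proof.
  induction la as [|a la IH]; intros Hm; simpl; [lia|].
  rewrite filter_app, length_app.
  assert (Ha : length (filter (fun p => f (fst p) (snd p)) (map (fun y => (a, y)) lb))
               = length (filter (f a) lb)).
  { clear. induction lb as [|b lb IH]; simpl; auto. destruct (f a b); simpl; auto. }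
  rewrite Ha. specialize (IH (fun a' H => Hm a' (or_intror H))).
  specialize (Hm a (or_introl eq_refl)). lia.
Qed.

Lemma count_good_pairs {A B C E : Type} (good : A -> B -> Prop) (k : nat)
  (la : list A) (lb : list B) (lc : list C) (ld : list E) (F : C -> E -> A * B) :
  NoDup la -> NoDup lb ->
  (forall a, In a la -> exists lbad, (length lbad <= k)%nat /\
     forall b, In b lb -> ~ good a b -> In b lbad) ->
  (forall a b, In a la -> In b lb -> good a b ->
     exists c e, In c lc /\ In e ld /\ F c e = (a, b)) ->
  (length la * (length lb - k) <= length lc * length ld)%nat.
Proof.
  intros Hla Hlb Hbad Hcover.
  set (goodb a b := if excluded_middle_informative (good a b) then true else false).
  set (P := filter (fun p => goodb (fst p) (snd p)) (list_prod la lb)).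
  assert (Hlower : (length la * (length lb - k) <= length P)%nat).
  { apply length_filter_list_prod_ge. intros a Ha.
    destruct (Hbad a Ha) as [lbad [Hk Hin]].
    assert (length (filter (fun b => negb (goodb a b)) lb) <= length lbad)%nat.
    { apply NoDup_incl_length; [apply NoDup_filter, Hlb|].
      intros b Hb. apply filter_In in Hb as [Hb Hg]. apply Hin; auto.
      unfold goodb in Hg. destruct excluded_middle_informative; [discriminate|auto]. }
    pose proof (filter_length (goodb a) lb). lia. }
  assert (Hupper : (length P <= length lc * length ld)%nat).
  { rewrite <- length_prod, <- (length_map (fun p => F (fst p) (snd p))).
    apply NoDup_incl_length; [apply NoDup_filter, NoDup_list_prod; auto|].
    intros [a b] Hab. apply filter_In in Hab as [Hab Hg]. apply in_prod_iff in Hab as [Ha Hb].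
    unfold goodb in Hg; simpl in Hg.
    destruct excluded_middle_informative as [Hgood|]; [|discriminate].
    destruct (Hcover a b Ha Hb Hgood) as [c [e [Hc [He HF]]]].
    apply in_map_iff. exists (c, e). split; auto. apply in_prod; auto. }
  lia.
Qed.

Lemma Rabs_sub_clamp (a b s t : R) :
  a <= t <= b -> a <= b -> Rabs (t - Rmax a (Rmin b s)) <= Rabs (t - s).
Proof.
  intros Ht Hab. unfold Rmax, Rmin, Rabs.
  repeat (destruct Rle_dec || destruct Rcase_abs); lra.
Qed.

Lemma ln_le_ln (a b : R) : 0 < a -> a <= b -> ln a <= ln b.
Proof.
  intros Ha [Hab | ->]; [left; apply ln_increasing; assumption | right; reflexivity].
Qed.

Lemma exp_le_exp (a b : R) : a <= b -> exp a <= exp b.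
Proof. intros [Hab | ->]; [left; apply exp_increasing; assumption | right; reflexivity]. Qed.

Lemma nat_floor_exists (y : R) : 0 <= y -> exists k : nat, INR k <= y < INR k + 1.
Proof.
  intros Hy. destruct (base_Int_part y) as [H1 H2].
  assert (Hz : (0 <= Int_part y)%Z).
  { assert (Hz' : (-1 < Int_part y)%Z) by (apply lt_IZR; simpl; lra). lia. }
  exists (Z.to_nat (Int_part y)). rewrite INR_IZR_INZ, Z2Nat.id by assumption. lra.
Qed.

Section HyperbolicGeometry.

Context {X : Type} {d : X -> X -> R} {delta : R}.
Hypothesis hyp : Hyperbolic d delta.

Lemma hyperbolic_metric : IsMetric d.
Proof. apply hyp. Qed.

Lemma gromov_bounds (x y z : X) :
  0 <= gromov d x y z /\ gromov d x y z <= d x y /\ gromov d x y z <= d x z.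
Proof.
  destruct hyperbolic_metric as [_ [_ [Hsym Htri]]]. unfold gromov.
  pose proof (Htri y x z). pose proof (Htri x y z). pose proof (Htri x z y).
  pose proof (Hsym x y). pose proof (Hsym y z). lra.
Qed.

(* The point at distance [(y|z)_x] from [x] on [x,y] is [(x|z)_y] away from [y]
   and, by thinness, [delta]-close to the point at the same distance on [x,z]. *)
Lemma dist_to_geodesic (x y z : X) (c : R -> X) (s : R) :
  IsGeodesic d x z c -> 0 <= s <= d x z ->
  d y (c s) <= gromov d y x z + delta + Rabs (gromov d x y z - s).
Proof.
  intros Hc Hs.
  destruct hyp as [[_ [_ [Hsym Htri]]] [Hgeo [_ Hthin]]].
  destruct (Hgeo x y) as [c1 Hc1]. destruct (Hgeo y z) as [c2 Hc2].
  destruct (Hthin x y z c1 c c2 Hc1 Hc Hc2) as [Hthin_xy _].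
  destruct (gromov_bounds x y z) as [G0 [Gy Gz]].
  set (tau := gromov d x y z) in *.
  assert (Hy : d y (c1 tau) = d x y - tau).
  { destruct Hc1 as [_ [C1 Cd]].
    rewrite <- C1 at 1. rewrite Cd by (split; lra).
    unfold Rabs; destruct Rcase_abs; lra. }
  assert (Hgy : gromov d y x z = d x y - tau).
  { unfold tau, gromov. rewrite (Hsym y x). lra. }
  assert (Hcs : d (c tau) (c s) = Rabs (tau - s)) by (apply Hc; lra).
  pose proof (Hthin_xy tau ltac:(lra)).
  pose proof (Htri y (c1 tau) (c s)). pose proof (Htri (c1 tau) (c tau) (c s)). lra.
Qed.

Lemma exists_point_shadow (x u : X) (C : R) :
  0 <= C -> exists p, forall y, C < gromov d x y u -> d y p <= d x y - C + delta.
Proof.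
  intros HC. destruct (Rle_lt_dec C (d x u)) as [HCu | HCu].
  - destruct hyp as [_ [Hgeo _]]. destruct (Hgeo x u) as [c Hc].
    exists (c C). intros y Hy.
    pose proof (dist_to_geodesic x y u c C Hc ltac:(lra)) as Hd.
    rewrite Rabs_right in Hd by lra.
    destruct hyperbolic_metric as [_ [_ [Hsym _]]].
    unfold gromov in *. rewrite (Hsym y x) in Hd. lra.
  - exists x. intros y Hy. destruct (gromov_bounds x y u). lra.
Qed.

Lemma exists_point_annulus (x z : X) (C t l : R) :
  exists p, forall y, gromov d y x z <= C -> t <= d y z <= t + l ->
    d y p <= C + l / 2 + delta.
Proof.
  destruct hyp as [[Hpos [_ [Hsym _]]] [Hgeo _]]. destruct (Hgeo x z) as [c Hc].
  pose proof (Hpos x z).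
  set (s := Rmax 0 (Rmin (d x z) (d x z - t + C - l / 2))).
  assert (Hs : 0 <= s <= d x z).
  { unfold s, Rmax, Rmin. repeat destruct Rle_dec; lra. }
  exists (c s). intros y HyC Hyz.
  pose proof (dist_to_geodesic x y z c s Hc Hs) as Hd.
  destruct (gromov_bounds x y z) as [G0 [_ Gz]].
  destruct (gromov_bounds y x z) as [G0' _].
  pose proof (Rabs_sub_clamp 0 (d x z) (d x z - t + C - l / 2) (gromov d x y z)
                ltac:(lra) ltac:(lra)) as Hclamp.
  fold s in Hclamp.
  assert (Habs : gromov d y x z + Rabs (gromov d x y z - (d x z - t + C - l / 2))
                 <= C + l / 2).
  { unfold gromov in *. rewrite (Hsym y x) in *.
    unfold Rabs; destruct Rcase_abs; lra. }
  lra.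
Qed.

Lemma hyperbolic_delta_nonneg (x : X) : 0 <= delta.
Proof.
  destruct hyp as [[_ [Hzero _]] [_ [_ Hthin]]].
  assert (Hxx : d x x = 0) by (apply Hzero; reflexivity).
  assert (Hc : IsGeodesic d x x (fun _ => x)).
  { split; [auto|split; [auto|]]. intros s t Hs Ht.
    rewrite Hxx in *. replace (s - t) with 0 by lra. rewrite Rabs_R0; auto. }
  destruct (Hthin x x x _ _ _ Hc Hc Hc) as [Hthin_xx _].
  assert (gromov d x x x = 0) by (unfold gromov; rewrite Hxx; lra).
  specialize (Hthin_xx 0 ltac:(lra)). simpl in Hthin_xx. lra.
Qed.

End HyperbolicGeometry.

Section OrbitCounting.

Context {X G : Type} {d : X -> X -> R} {delta D : R}
  {mul : G -> G -> G} {inv : G -> G} {e : G} {act : G -> X -> X} (x : X).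
Hypotheses (hyp : Hyperbolic d delta) (group : IsGroup mul inv e)
  (isom : IsometricAction mul e d act) (proper : ProperAction d act)
  (diam : QuotDiamLe d act D).

Definition disp (g : G) : R := d x (act g x).

Lemma mul_inv_cancel_l (g a : G) : mul g (mul (inv g) a) = a.
Proof.
  destruct group as [Hassoc [Hid Hinv]].
  rewrite Hassoc. destruct (Hinv g) as [_ ->]. apply Hid.
Qed.

Lemma inv_mul_cancel_l (g a : G) : mul (inv g) (mul g a) = a.
Proof.
  destruct group as [Hassoc [Hid Hinv]].
  rewrite Hassoc. destruct (Hinv g) as [-> _]. apply Hid.
Qed.

Lemma dist_act_inv (g : G) (y z : X) : d y (act (inv g) z) = d (act g y) z.
Proof.
  destruct isom as [Hact_e [Hact_mul Hact_isom]]. destruct group as [_ [_ Hinv]].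
  rewrite <- (Hact_isom g), <- Hact_mul. destruct (Hinv g) as [_ ->].
  rewrite Hact_e. reflexivity.
Qed.

Lemma gromov_translate (a b : G) :
  gromov d (act a x) x (act (mul a b) x) = gromov d x (act b x) (act (inv a) x).
Proof.
  destruct isom as [_ [Hact_mul Hact_isom]]. destruct hyp as [[_ [_ [Hsym _]]] _].
  unfold gromov. rewrite !dist_act_inv, Hact_mul, Hact_isom.
  rewrite (Hsym (act a x) x), (Hsym (act a (act b x)) x). lra.
Qed.

Lemma ball_list_exists (r : R) : exists l, NoDup l /\ forall g, In g l <-> disp g < r.
Proof.
  destruct (proper x r) as [n [l [Hl [_ Hin]]]].
  exists (filter (fun g => if Rlt_dec (disp g) r then true else false) l).
  split; [apply NoDup_filter, Hl|]. intros g. rewrite filter_In.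
  destruct Rlt_dec as [Hg|Hg]; split; intros H; try tauto.
  - split; auto. apply Hin. unfold disp in Hg. lra.
  - destruct H; discriminate.
Qed.

Definition ball_list (r : R) : list G :=
  proj1_sig (constructive_indefinite_description _ (ball_list_exists r)).

Lemma ball_list_spec (r : R) :
  NoDup (ball_list r) /\ forall g, In g (ball_list r) <-> disp g < r.
Proof. exact (proj2_sig (constructive_indefinite_description _ (ball_list_exists r))). Qed.

Lemma ball_list_NoDup (r : R) : NoDup (ball_list r).
Proof. apply ball_list_spec. Qed.

Lemma In_ball_list (r : R) (g : G) : In g (ball_list r) <-> disp g < r.
Proof. apply ball_list_spec. Qed.

Definition ball_card (r : R) : nat := length (ball_list r).

Lemma HasCard_ball_card (r : R) (n : nat) :
  HasCard (fun g => d x (act g x) < r) n -> n = ball_card r.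
Proof. intros Hn. apply (HasCard_length _ _ _ Hn (ball_list_NoDup r) (In_ball_list r)). Qed.

Lemma ball_card_le (r r' : R) : r <= r' -> (ball_card r <= ball_card r')%nat.
Proof.
  intros Hr. apply NoDup_incl_length; [apply ball_list_NoDup|].
  intros g Hg. apply In_ball_list in Hg. apply In_ball_list. lra.
Qed.

Lemma ball_card_pos (r : R) : 0 < r -> (1 <= ball_card r)%nat.
Proof.
  intros Hr. destruct hyp as [[_ [Hzero _]] _]. destruct isom as [Hact_e _].
  assert (He : In e (ball_list r)).
  { apply In_ball_list. unfold disp. rewrite Hact_e, (proj2 (Hzero x x) eq_refl). exact Hr. }
  unfold ball_card. destruct (ball_list r); [contradiction|simpl; lia].
Qed.

Lemma ball_card_nonpos (r : R) : r <= 0 -> ball_card r = 0%nat.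
Proof.
  intros Hr. destruct hyp as [[Hpos _] _]. unfold ball_card.
  destruct (ball_list r) as [|g l] eqn:El; [reflexivity|].
  assert (Hg : In g (ball_list r)) by (rewrite El; left; reflexivity).
  apply In_ball_list in Hg. unfold disp in Hg. pose proof (Hpos x (act g x)). lra.
Qed.

Lemma quot_diam_nonneg : 0 <= D.
Proof.
  destruct (Rle_lt_dec 0 D) as [HD|HD]; [exact HD|].
  destruct (diam x x (- D / 2)) as [g Hg]; [lra|].
  destruct hyp as [[Hpos _] _]. pose proof (Hpos x (act g x)). lra.
Qed.

Lemma disp_mul_le (a b : G) : disp (mul a b) <= disp a + disp b.
Proof.
  destruct hyp as [[_ [_ [_ Htri]]] _]. destruct isom as [_ [Hact_mul Hact_isom]].
  unfold disp. rewrite Hact_mul, <- (Hact_isom a x (act b x)). apply Htri.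
Qed.

Lemma disp_inv_mul (g b : G) : disp (mul (inv g) b) = d (act g x) (act b x).
Proof.
  destruct isom as [_ [Hact_mul _]]. unfold disp. rewrite Hact_mul. apply dist_act_inv.
Qed.

Lemma exists_translate_shadow (a : G) (C t l eps : R) :
  0 <= C -> 0 < eps -> D + delta + eps + l <= C ->
  exists g, forall b, disp b < t + l -> C < gromov d (act a x) x (act (mul a b) x) ->
    disp (mul (inv g) b) < t.
Proof.
  intros HC Heps HCl. destruct hyp as [[_ [_ [Hsym Htri]]] _].
  destruct (exists_point_shadow hyp x (act (inv a) x) C HC) as [p Hp].
  destruct (diam p x eps Heps) as [g Hg].
  exists g. intros b Hb Hgrom. rewrite gromov_translate in Hgrom.
  specialize (Hp _ Hgrom). rewrite disp_inv_mul. unfold disp in Hb.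
  pose proof (Htri (act g x) p (act b x)).
  pose proof (Hsym (act g x) p). pose proof (Hsym (act b x) p). lra.
Qed.

Lemma exists_annulus_section (C t l eps : R) :
  0 < eps -> C + l / 2 + delta + D + eps <= t ->
  exists gw : G -> G, forall a b, t <= disp b <= t + l ->
    gromov d (act a x) x (act (mul a b) x) <= C -> disp (mul (inv (gw (mul a b))) a) < t.
Proof.
  intros Heps Ht.
  destruct hyp as [[_ [_ [Hsym Htri]]] _]. destruct isom as [_ [Hact_mul Hact_isom]].
  destruct (choice (fun w g => forall y, gromov d y x (act w x) <= C ->
              t <= d y (act w x) <= t + l -> d (act g x) y < t)) as [gw Hgw].
  { intros w. destruct (exists_point_annulus hyp x (act w x) C t l) as [p Hp].
    destruct (diam p x eps Heps) as [g Hg]. exists g. intros y H1 H2.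
    specialize (Hp y H1 H2). pose proof (Htri (act g x) p y).
    pose proof (Hsym (act g x) p). pose proof (Hsym p y). lra. }
  exists gw. intros a b Hb HC. rewrite disp_inv_mul. apply Hgw; [exact HC|].
  rewrite Hact_mul, Hact_isom. exact Hb.
Qed.

Lemma ball_card_product (r t s : R) :
  0 < r -> 10 * (D + 2 * delta) <= r -> r <= t ->
  (ball_card s * (ball_card (t + r / 4) - 2 * ball_card t)
     <= ball_card (s + (t + r / 4)) * ball_card t)%nat.
Proof.
  intros Hr Hrd Hrt.
  pose proof quot_diam_nonneg as HD. pose proof (hyperbolic_delta_nonneg hyp x) as Hdelta.
  set (C := r / 4 + D + delta + r / 10).
  destruct (exists_annulus_section C t (r / 4) (r / 10)) as [gw Hgw]; [lra | unfold C; lra |].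
  unfold ball_card.
  apply (count_good_pairs
           (fun a b => t <= disp b /\ gromov d (act a x) x (act (mul a b) x) <= C))
    with (F := fun w c => (mul (gw w) c, mul (inv (mul (gw w) c)) w));
    try apply ball_list_NoDup.
  - intros a _.
    destruct (exists_translate_shadow a C t (r / 4) (r / 10)) as [g Hg];
      [unfold C; lra | lra | unfold C; lra |].
    exists (ball_list t ++ map (mul g) (ball_list t)).
    split; [rewrite length_app, length_map; lia|].
    intros b Hb Hbad. apply In_ball_list in Hb. apply in_or_app.
    destruct (Rlt_le_dec (disp b) t) as [Hbt | Hbt]; [left; apply In_ball_list, Hbt | right].
    apply in_map_iff. exists (mul (inv g) b). split; [apply mul_inv_cancel_l|].
    apply In_ball_list, Hg; [exact Hb|].
    destruct (Rlt_le_dec C (gromov d (act a x) x (act (mul a b) x))); [assumption | tauto].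
  - intros a b Ha Hb [Hbt HC]. apply In_ball_list in Ha, Hb.
    exists (mul a b), (mul (inv (gw (mul a b))) a). split; [|split].
    + apply In_ball_list. pose proof (disp_mul_le a b). lra.
    + apply In_ball_list, Hgw; [lra | exact HC].
    + rewrite mul_inv_cancel_l, inv_mul_cancel_l. reflexivity.
Qed.

Context {H : R}.
Hypothesis entropy : EntLe d act x H.

Lemma entropy_nonneg : 0 <= H.
Proof.
  apply Rle_plus_epsilon. intros eps Heps.
  destruct (entropy eps 0 Heps) as [r [n [_ [Hr [Hn Hln]]]]].
  rewrite (HasCard_ball_card r n Hn) in Hln.
  pose proof (ball_card_pos r Hr) as Hpos. apply le_INR in Hpos. simpl in Hpos.
  assert (Hlog : 0 <= ln (INR (ball_card r))) by (rewrite <- ln_1; apply ln_le_ln; lra).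
  assert (0 <= ln (INR (ball_card r)) / r)
    by (apply Rmult_le_pos; [assumption | left; apply Rinv_0_lt_compat, Hr]).
  lra.
Qed.

Lemma growth_rate_le_entropy (L beta : R) :
  0 < L -> 0 < beta ->
  (forall k : nat, beta ^ k <= INR (ball_card (INR (S k) * L))) ->
  ln beta <= H * L.
Proof.
  intros HL Hbeta Hgrowth. pose proof entropy_nonneg as HH.
  apply Rle_plus_epsilon. intros eps Heps.
  set (eta := eps / (2 * L)).
  assert (Heta : 0 < eta) by (apply Rdiv_lt_0_compat; lra).
  assert (HetaL : eta * L = eps / 2) by (unfold eta; field; lra).
  set (K := 4 * (H + eta) * L / eps).
  assert (HK : K * eps = 4 * (H + eta) * L) by (unfold K; field; lra).
  assert (HK0 : 0 <= K) by (apply Rmult_le_pos; [nra | left; apply Rinv_0_lt_compat, Heps]).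
  destruct (entropy eta ((K + 2) * L) Heta) as [r [n [Hr [Hr0 [Hn Hln]]]]].
  rewrite (HasCard_ball_card r n Hn) in Hln.
  assert (Hlog : ln (INR (ball_card r)) <= (H + eta) * r).
  { replace (ln (INR (ball_card r))) with (ln (INR (ball_card r)) / r * r) by (field; lra).
    apply Rmult_le_compat_r; lra. }
  assert (HrL : r = r / L * L) by (field; lra).
  assert (HrK : K + 2 <= r / L).
  { apply (Rmult_le_reg_r L); [assumption|]. lra. }
  destruct (nat_floor_exists (r / L - 1)) as [k [Hk1 Hk2]]; [lra|].
  assert (HkK : K < INR k) by lra.
  assert (Hkr : INR (S k) * L <= r <= (INR k + 2) * L).
  { rewrite S_INR. split; rewrite HrL; apply Rmult_le_compat_r; lra. }
  assert (Hpow : beta ^ k <= INR (ball_card r)).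
  { apply (Rle_trans _ _ _ (Hgrowth k)). apply le_INR, ball_card_le. lra. }
  assert (Hklog : INR k * ln beta <= (H + eta) * ((INR k + 2) * L)).
  { rewrite <- ln_pow by assumption.
    apply (Rle_trans _ _ _ (ln_le_ln _ _ (pow_lt _ _ Hbeta) Hpow)).
    apply (Rle_trans _ _ _ Hlog). apply Rmult_le_compat_l; lra. }
  apply (Rmult_le_reg_l (INR k)); [lra|]. nra.
Qed.

Lemma ball_card_quarter_step (r t : R) :
  0 < r -> 10 * (D + 2 * delta) <= r -> r <= t ->
  INR (ball_card (t + r / 4)) <= 3 * exp (H * (t + r / 4)) * INR (ball_card t).
Proof.
  intros Hr Hrd Hrt. set (t' := t + r / 4).
  pose proof entropy_nonneg as HH.
  pose proof (ball_card_pos t ltac:(lra)) as Hn. apply le_INR in Hn. simpl in Hn.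
  assert (Hexp : 1 <= exp (H * t')).
  { pose proof (exp_ineq1_le (H * t')).
    assert (0 <= H * t') by (apply Rmult_le_pos; unfold t'; lra). lra. }
  destruct (le_lt_dec (ball_card t') (2 * ball_card t)) as [Hsmall | Hbig].
  { apply le_INR in Hsmall. rewrite mult_INR in Hsmall. simpl in Hsmall. nra. }
  set (beta := (INR (ball_card t') - 2 * INR (ball_card t)) / INR (ball_card t)).
  assert (Hbeta : beta * INR (ball_card t) = INR (ball_card t') - 2 * INR (ball_card t))
    by (unfold beta; field; lra).
  assert (Hbeta0 : 0 < beta).
  { apply lt_INR in Hbig. rewrite mult_INR in Hbig. simpl in Hbig.
    unfold beta. apply Rdiv_lt_0_compat; lra. }
  assert (Hstep : forall s, beta * INR (ball_card s) <= INR (ball_card (s + t'))).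
  { intros s. pose proof (ball_card_product r t s Hr Hrd Hrt) as Hprod.
    fold t' in Hprod. apply le_INR in Hprod.
    rewrite !mult_INR, minus_INR, mult_INR in Hprod by lia. simpl in Hprod.
    apply (Rmult_le_reg_r (INR (ball_card t))); [lra|].
    rewrite Rmult_assoc, (Rmult_comm (INR (ball_card s))), <- Rmult_assoc, Hbeta. lra. }
  assert (Hgrowth : forall k : nat, beta ^ k <= INR (ball_card (INR (S k) * t'))).
  { induction k as [|k IH].
    - simpl. rewrite Rmult_1_l. apply (le_INR 1), ball_card_pos. unfold t'; lra.
    - rewrite S_INR, Rmult_plus_distr_r, Rmult_1_l. simpl (beta ^ S k).
      apply (Rle_trans _ (beta * INR (ball_card (INR (S k) * t')))); [|apply Hstep].
      apply Rmult_le_compat_l; lra. }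
  pose proof (growth_rate_le_entropy t' beta ltac:(unfold t'; lra) Hbeta0 Hgrowth) as Hln.
  apply exp_le_exp in Hln. rewrite exp_ln in Hln by assumption.
  nra.
Qed.

Lemma ball_card_double_le (r : R) :
  0 < r -> 10 * (D + 2 * delta) <= r ->
  INR (ball_card (2 * r)) <= 3 ^ 4 * exp (13 / 2 * H * r) * INR (ball_card r).
Proof.
  intros Hr Hrd.
  assert (Hstep : forall t t', r <= t -> t' = t + r / 4 ->
            INR (ball_card t') <= 3 * exp (H * t') * INR (ball_card t)).
  { intros t t' Ht ->. apply ball_card_quarter_step; assumption. }
  assert (Hmono : forall a y z, y <= z -> 3 * exp a * y <= 3 * exp a * z).
  { intros a y z Hyz. apply Rmult_le_compat_l; [pose proof (exp_pos a); lra | exact Hyz]. }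
  pose proof (Hstep r (5 * r / 4) ltac:(lra) ltac:(lra)) as S1.
  pose proof (Hstep (5 * r / 4) (3 * r / 2) ltac:(lra) ltac:(lra)) as S2.
  pose proof (Hstep (3 * r / 2) (7 * r / 4) ltac:(lra) ltac:(lra)) as S3.
  pose proof (Hstep (7 * r / 4) (2 * r) ltac:(lra) ltac:(lra)) as S4.
  apply (Rle_trans _ _ _ S4), (Rle_trans _ _ _ (Hmono _ _ _ S3)),
    (Rle_trans _ _ _ (Hmono _ _ _ (Hmono _ _ _ S2))),
    (Rle_trans _ _ _ (Hmono _ _ _ (Hmono _ _ _ (Hmono _ _ _ S1)))).
  right. replace (13 / 2 * H * r)
    with (H * (2 * r) + H * (7 * r / 4) + H * (3 * r / 2) + H * (5 * r / 4)) by lra.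
  rewrite !exp_plus. ring.
Qed.

End OrbitCounting.

Theorem theorem5p1 (X G : Type) (d : X -> X -> R) (delta D H : R)
  (mul : G -> G -> G) (inv : G -> G) (e : G) (act : G -> X -> X) :
  Hyperbolic d delta ->
  IsGroup mul inv e ->
  IsometricAction mul e d act ->
  ProperAction d act ->
  QuotDiamLe d act D ->
  (forall x0, EntLe d act x0 H) ->
  forall (x : X) (r : R), r >= 10 * (D + 2 * delta) ->
  forall n1 n2 : nat,
    HasCard (fun g => d x (act g x) < r) n1 ->
    HasCard (fun g => d x (act g x) < 2 * r) n2 ->
    INR n2 / INR n1 <= 3 ^ 4 * exp (13 / 2 * H * r).
Proof.
  intros hyp group isom proper diam entropy x r Hr n1 n2 Hn1 Hn2.
  rewrite (HasCard_ball_card x proper r n1 Hn1),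
    (HasCard_ball_card x proper (2 * r) n2 Hn2).
  pose proof (exp_pos (13 / 2 * H * r)).
  destruct (Rle_lt_dec r 0) as [Hr0 | Hr0].
  - rewrite (ball_card_nonpos x hyp proper (2 * r)) by lra.
    unfold Rdiv. rewrite Rmult_0_l. lra.
  - pose proof (ball_card_pos x hyp isom proper r Hr0) as Hpos.
    apply le_INR in Hpos. simpl in Hpos.
    pose proof (ball_card_double_le x hyp group isom proper diam (entropy x) r Hr0
                  (Rge_le _ _ Hr)) as Hdouble.
    apply (Rmult_le_reg_r (INR (ball_card x proper r))); [lra|].
    unfold Rdiv. rewrite Rmult_assoc, Rinv_l, Rmult_1_r by lra. exact Hdouble.
Qed.
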